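(* Let $S=(U,F)$ be an undirected graph on $q$ nodes (possibly with self-loops) that has an odd cycle, and let $x^*$ lie in the relative interior of $\mathcal{X}(S)$. Then there exist a closed neighborhood $\mathcal{U}$ of $x^*$ in the simplex $\Delta^{q-1}$ (with $\mathcal{U}\subseteq\mathcal{X}(S)$) and a continuous map $\phi:\mathcal{U}\to\operatorname{int}\Delta^{|F|-1}$ such that $Z_S\phi(x)=x$ for all $x\in\mathcal{U}$.
   Context: $\Delta^{m-1}=\{x\in\mathbb{R}^m: x\ge 0,\ \mathbf{1}^\top x=1\}$ is the standard simplex, and $\operatorname{int}\Delta^{m-1}$ denotes its relative interior (all entries positive). The incidence matrix $Z_S$ of $S$ is the $q\times|F|$ matrix whose column $z_j$, for edge $f_j$, has entry $1$ at $u_i$ if $f_j$ is a self-loop at $u_i$, entries $1/2$ at the two endpoints if $f_j$ is a non-loop edge, and $0$ elsewhere. The edge polytope is $\mathcal{X}(S)=\operatorname{conv}\{z_j\}$, relative interior taken in its affine hull. A cycle is odd if it has an odd number of distinct nodes; self-loops count as odd cycles. *)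

From HB Require Import structures.
From mathcomp Require Import all_boot all_order all_algebra.
From mathcomp Require Import all_classical all_reals all_analysis.
Unset Implicit Arguments.
Import Order.TTheory GRing.Theory Num.Theory.
Import numFieldNormedType.Exports.
Local Open Scope classical_set_scope.
Local Open Scope ring_scope.

(* A graph S = (U, F): nodes U = 'I_q, edges F indexed by 'I_m,
   edge j having endpoints e j = (u, v) (u = v means a self-loop). *)

Definition edges_distinct (q m : nat) (e : 'I_m -> 'I_q * 'I_q) : Prop :=
  forall j k : 'I_m, (e j == e k) || (e j == ((e k).2, (e k).1)) -> j = k.

Definition adj (q m : nat) (e : 'I_m -> 'I_q * 'I_q) : rel 'I_q :=
  fun u v => [exists j, (e j == (u, v)) || (e j == (v, u))].

Definition graph_connected (q m : nat) (e : 'I_m -> 'I_q * 'I_q) : Prop :=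
  forall u v : 'I_q, connect (adj q m e) u v.

(* An odd cycle: distinct nodes v_0, ..., v_{k-1}, k odd, consecutive ones
   (cyclically) adjacent; k = 1 is exactly a self-loop. *)
Definition has_odd_cycle (q m : nat) (e : 'I_m -> 'I_q * 'I_q) : Prop :=
  exists s : seq 'I_q, [&& uniq s, odd (size s) & cycle (adj q m e) s].

Definition simplex (R : realType) (n : nat) : set 'cV[R]_n :=
  [set x | (forall i, 0 <= x i 0) /\ \sum_i x i 0 = 1].

Definition int_simplex (R : realType) (n : nat) : set 'cV[R]_n :=
  [set x | (forall i, 0 < x i 0) /\ \sum_i x i 0 = 1].


Definition incidence (R : realType) (q m : nat) (e : 'I_m -> 'I_q * 'I_q)
  : 'M[R]_(q, m) :=
  \matrix_(i, j) (if (e j).1 == (e j).2 then ((i == (e j).1)%:R : R)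
                  else (i == (e j).1)%:R / 2 + (i == (e j).2)%:R / 2).


Definition edge_polytope (R : realType) (q m : nat) (e : 'I_m -> 'I_q * 'I_q)
  : set 'cV[R]_q :=
  [set incidence R q m e *m l | l in simplex R m].


Definition edge_aff_hull (R : realType) (q m : nat) (e : 'I_m -> 'I_q * 'I_q)
  : set 'cV[R]_q :=
  [set incidence R q m e *m l | l in [set l : 'cV[R]_m | \sum_i l i 0 = 1]].


Definition rel_interior (R : realType) (n : nat) (A H : set 'cV[R]_n)
  : set 'cV[R]_n :=
  [set x | A x /\ exists2 eps : R, 0 < eps & ball x eps `&` H `<=` A].

From HB Require Import structures.
From mathcomp Require Import all_boot all_order all_algebra.
From mathcomp Require Import all_classical all_reals all_analysis.
From mathcomp Require Import ring lra.
Set Implicit Arguments.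
Unset Strict Implicit.

Import Order.TTheory GRing.Theory Num.Theory.
Import numFieldNormedType.Exports.
Local Open Scope classical_set_scope.
Local Open Scope ring_scope.

(* The incidence matrix Z of S has full row rank.  The column of an edge uv is
   (e_u + e_v)/2, so a walk x = v_0, ..., v_k puts e_x - (-1)^k e_(v_k) in the
   column space; an odd cycle through x gives 2 e_x, and connectivity then
   gives every e_v.  With a right inverse P of Z and a strictly positive
   preimage l of x^* (it exists because x^* is relatively interior), the
   affine map phi x = l + P (x - x^* ) is continuous, satisfies Z phi x = x,
   preserves the coordinate sum (the columns of Z sum to 1), and stays
   strictly positive near x^*. *)

Lemma right_inverse_of_full_rank (F : fieldType) (q m : nat)
    (A : 'M[F]_(q, m)) :
  \rank A = q -> exists P : 'M[F]_(m, q), A *m P = 1%:M.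
Proof.
move=> rkA; have /row_fullP [B BA] : row_full A^T.
  by rewrite /row_full mxrank_tr rkA.
by exists B^T; rewrite -[A]trmxK -trmx_mul BA trmx1.
Qed.

Lemma sum_mulmx_col_stochastic (R : numDomainType) (q m : nat)
    (A : 'M[R]_(q, m)) (w : 'cV[R]_m) :
  (forall j, \sum_i A i j = 1) -> \sum_i (A *m w) i 0 = \sum_j w j 0.
Proof.
move=> A1; under eq_bigr do rewrite mxE.
rewrite exchange_big /=; apply: eq_bigr => j _.
by rewrite -mulr_suml A1 mul1r.
Qed.

Section Incidence.
Variables (R : realType) (q m : nat) (e : 'I_m -> 'I_q * 'I_q).
Local Notation Z := (incidence R q m e).

Lemma sum_col_incidence j : \sum_i Z i j = 1.
Proof.
have sum_delta (u : 'I_q) : \sum_i ((i == u)%:R : R) = 1.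
  by rewrite (bigD1 u) //= eqxx big1 ?addr0 // => i /negbTE ->.
under eq_bigr do rewrite mxE.
case: eqP => _; first exact: sum_delta.
by rewrite big_split /= -!mulr_suml !sum_delta -splitr.
Qed.

Lemma adj_sub_incidence u v :
  adj q m e u v -> (('e_u + 'e_v : 'rV_q)%R <= Z^T)%MS.
Proof.
case/existsP=> j ej; suff -> : 'e_u + 'e_v = 2 *: row j Z^T.
  exact/scalemx_sub/row_sub.
apply/rowP=> a; rewrite !mxE eqxx /=.
have [uv|uv] := eqVneq u v; first subst v.
  by case/orP: ej => /eqP -> /=; rewrite eqxx; lra.
have vu : v != u by rewrite eq_sym.
by case/orP: ej => /eqP -> /=; rewrite ?(negbTE uv) ?(negbTE vu); lra.
Qed.

Lemma path_sub_incidence x p : path (adj q m e) x p ->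
  (('e_x - (-1) ^+ size p *: 'e_(last x p) : 'rV_q)%R <= Z^T)%MS.
Proof.
elim: p x => [|y p IHp] x /=; first by rewrite scale1r subrr sub0mx.
case/andP=> /adj_sub_incidence xy /IHp yp.
rewrite exprS mulN1r scaleNr opprK.
set s := (-1) ^+ size p; set l := last y p.
have -> : 'e_x + s *: 'e_l = 'e_x + 'e_y + (-1) *: ('e_y - s *: 'e_l) :> 'rV_q.
  by rewrite scaleN1r opprB addrCA addrK addrC.
by rewrite addmx_sub ?scalemx_sub.
Qed.

Lemma mxrank_incidence :
  graph_connected q m e -> has_odd_cycle q m e -> \rank Z = q.
Proof.
move=> conn [[|x p] /and3P [_ odd_s cyc]] //.
have ex : (('e_x : 'rV_q) <= Z^T)%MS.
  have := path_sub_incidence cyc; rewrite last_rcons size_rcons -signr_odd.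
  rewrite odd_s expr1 scaleN1r opprK -mulr2n -scaler_nat.
  by rewrite (eqmx_scale _ _) ?pnatr_eq0.
have ei i : (('e_i : 'rV_q) <= Z^T)%MS.
  have /connectP [r xr ->] := conn x i.
  have := path_sub_incidence xr; set s : R := (-1) ^+ size r => exs.
  rewrite -(eqmx_scale _ (negbT (signr_eq0 _ (size r)))) -/s.
  set v := last x r.
  have -> : s *: 'e_v = 'e_x + (-1) *: ('e_x - s *: 'e_v) :> 'rV_q.
    by rewrite scaleN1r opprB addrCA subrr addr0.
  by rewrite addmx_sub ?scalemx_sub.
apply/eqP; rewrite -mxrank_tr -/(row_full _) -sub1mx.
by apply/row_subP=> i; rewrite row1.
Qed.

End Incidence.

Lemma mulmx_continuous (R : realType) p n (A : 'M[R]_(p, n)) :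
  continuous (fun x : 'cV[R]_n => A *m x).
Proof.
have -> : (fun x : 'cV[R]_n => A *m x) = (fun x => \sum_k x k 0 *: col k A).
  apply/funext=> x; apply/colP=> i; rewrite !mxE summxE.
  by apply: eq_bigr => k _; rewrite !mxE mulrC.
move=> x; apply: (@cvg_big _ _ _ _ xpredT add_continuous _ (nbhs x)) => k _.
by apply: (@cvgZ _ _ _ (nbhs x)); [exact: coord_continuous | exact: cvg_cst].
Qed.

Lemma closed_simplex (R : realType) n : closed (simplex R n).
Proof.
have -> : simplex R n =
    (\bigcap_i (fun x : 'cV[R]_n => x i 0) @^-1` [set y | 0 <= y]) `&`
    (fun x : 'cV[R]_n => \sum_i x i 0) @^-1` [set 1].
  by apply/seteqP; split=> x [x_ge0 x_sum]; split=> // i *; apply: x_ge0.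
apply: closedI.
  apply: closed_bigI => i _.
  apply: preimage_closed; last exact: closed_ge.
  by move=> x _; exact: coord_continuous.
apply: preimage_closed; last exact: closed_eq.
move=> x _; apply: (@cvg_big _ _ _ _ xpredT add_continuous _ (nbhs x)) => i _.
exact: coord_continuous.
Qed.

Lemma rel_interior_int_simplex_preimage (R : realType) q m
    (A : 'M[R]_(q, m)) x :
  rel_interior R q [set A *m l | l in simplex R m]
    [set A *m l | l in [set l : 'cV[R]_m | \sum_i l i 0 = 1]] x ->
  exists2 l, int_simplex R m l & A *m l = x.
Proof.
case=> -[l0 [_ l0_sum] <-] [eps eps_gt0 sub].
have m_gt0 : (0 < m)%N.
  rewrite lt0n; apply/eqP=> m0; move: l0_sum.
  rewrite big1 => [/esym/eqP|[i i_lt] _]; first by rewrite oner_eq0.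
  by exfalso; rewrite m0 in i_lt.
have [c [c_gt0 c_sum]] : exists c, int_simplex R m c.
  exists (const_mx m%:R^-1); split=> [j|]; first by rewrite mxE invr_gt0 ltr0n.
  under eq_bigr do rewrite mxE.
  by rewrite sumr_const card_ord -[LHS]mulr_natr mulVf // pnatr_eq0 -lt0n.
(* Going from A c through x a little beyond x stays in the polytope, and x is
   then a strict convex combination of that point and A c. *)
set t := eps / (`|A *m l0 - A *m c| + 1).
have t_gt0 : 0 < t by rewrite divr_gt0 // ltr_pwDr.
have [l1 [l1_ge0 l1_sum] A_l1] : [set A *m l | l in simplex R m]
    (A *m ((1 + t) *: l0 - t *: c)).
  apply: sub; split.
    rewrite -ball_normE /= mulmxBr -!scalemxAr.
    have -> : A *m l0 - ((1 + t) *: (A *m l0) - t *: (A *m c)) =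
        t *: (A *m c - A *m l0).
      by apply/matrixP=> i j; rewrite !mxE; ring.
    rewrite normrZ gtr0_norm // distrC /t mulrAC ltr_pdivrMr ?ltr_pwDr //.
    by rewrite ltr_pM2l // ltrDl.
  exists ((1 + t) *: l0 - t *: c) => //=.
  under eq_bigr do rewrite !mxE.
  by rewrite sumrB -!mulr_sumr l0_sum c_sum !mulr1 addrK.
exists ((1 + t)^-1 *: (l1 + t *: c)).
  split=> [j|].
    by rewrite !mxE mulr_gt0 ?invr_gt0 ?ltr_pwDr ?ltr_wpDl ?l1_ge0 ?mulr_gt0.
  under eq_bigr do rewrite !mxE.
  rewrite -mulr_sumr big_split -mulr_sumr /= l1_sum c_sum mulr1.
  by rewrite mulVf // gt_eqF // ltr_pwDr.
rewrite -scalemxAr mulmxDr -scalemxAr A_l1 mulmxBr -!scalemxAr subrK.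
by rewrite scalerA mulVf ?scale1r // gt_eqF // ltr_pwDr.
Qed.

Section AffineSection.
Variables (R : realType) (q m : nat).
Variables (A : 'M[R]_(q, m)) (P : 'M[R]_(m, q)) (l : 'cV[R]_m).

Definition affine_section (x : 'cV[R]_q) := l + P *m (x - A *m l).

Lemma affine_section_continuous : continuous affine_section.
Proof.
have -> : affine_section = fun x => l - P *m (A *m l) + P *m x.
  by apply/funext=> x; rewrite /affine_section mulmxBr addrCA addrC.
move=> x; apply: (@cvgD _ _ _ (nbhs x)); first exact: cvg_cst.
exact: mulmx_continuous.
Qed.

Lemma mul_affine_section x : A *m P = 1%:M -> A *m affine_section x = x.
Proof. by move=> AP; rewrite mulmxDr mulmxA AP mul1mx addrC subrK. Qed.

Lemma affine_section_gt0_near :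
  (forall j, 0 < l j 0) ->
  exists2 eps : R, 0 < eps &
    forall x, ball (A *m l) eps x -> forall j, 0 < affine_section x j 0.
Proof.
move=> l_gt0.
have : \forall x \near A *m l, forall j, 0 < affine_section x j 0.
  apply: (@filter_forall _ _ _ (nbhs (A *m l))) => j.
  have cont_j : {for A *m l, continuous (fun x => affine_section x j 0)}.
    exact: continuous_comp (@affine_section_continuous _)
                           (@coord_continuous _ _ _ j 0 _).
  apply: (@cvgr_gt _ _ (nbhs (A *m l)) _ _ _ cont_j).
  by rewrite /affine_section subrr mulmx0 addr0.
by case/nbhs_ballP=> eps eps_gt0 pos; exists eps.
Qed.

End AffineSection.

Theorem lemma3 (R : realType) (q m : nat) (e : 'I_m -> 'I_q * 'I_q)
  (He : edges_distinct q m e) (Hconn : graph_connected q m e) (Hodd : has_odd_cycle q m e)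
  (xs : 'cV[R]_q) (Hxs : rel_interior R q (edge_polytope R q m e) (edge_aff_hull R q m e) xs) :
  exists U : set 'cV[R]_q,
    [/\ closed U, U `<=` simplex R q, U `<=` edge_polytope R q m e,
        (exists2 eps : R, 0 < eps & ball xs eps `&` simplex R q `<=` U) &
        exists phi : 'cV[R]_q -> 'cV[R]_m,
          {within U, continuous phi} /\
          forall x, U x -> int_simplex R m (phi x) /\ incidence R q m e *m phi x = x].
Proof.
set Z := incidence R q m e.
have [l [l_gt0 _] Zl] := rel_interior_int_simplex_preimage Hxs.
have [P ZP] := right_inverse_of_full_rank (mxrank_incidence R Hconn Hodd).
have [eps eps_gt0 phi_gt0] := affine_section_gt0_near Z P l_gt0.
set phi := affine_section Z P l.
have phi_int x : simplex R q x -> ball xs eps x -> int_simplex R m (phi x).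
  move=> [_ x_sum] x_near; split; first by apply: phi_gt0; rewrite Zl.
  rewrite -(sum_mulmx_col_stochastic _ (sum_col_incidence R e)).
  by rewrite mul_affine_section.
exists (closed_ball xs (eps / 2) `&` simplex R q); split.
- by apply: closedI; [exact: closed_ball_closed | exact: closed_simplex].
- by move=> x [].
- move=> x [/subset_closure_half x_near x_simplex]; exists (phi x).
    have [phi_pos phi_sum] := phi_int x x_simplex (x_near eps_gt0).
    by split=> // j; apply/ltW.
  exact: mul_affine_section.
- by exists (eps / 2) => [|x [/subset_closed_ball]]; first by rewrite divr_gt0.
- exists phi; split; first exact/continuous_subspaceT/affine_section_continuous.
  move=> x [/subset_closure_half x_near x_simplex].
  by split; [exact: phi_int (x_near eps_gt0) | exact: mul_affine_section].
Qed.
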